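(* Let $0<q<\infty$ and $\frac{q}{q+1}<p<\infty$, and let $r=\frac{pq}{pq+p-q}$ (equivalently $\frac1p+\frac1r=1+\frac1q$). Then $$\left(\frac{\sin_{p,q}x}{x}\right)^p+\left(\frac{\operatorname{tam}_{p,q}x}{x}\right)^r>2 \quad \text{for all } x\in\left(0,\tfrac{\pi_{p,q}}{2}\right),$$ and $$\left(\frac{\sinh_{p,q}x}{x}\right)^p+\left(\frac{\operatorname{tamh}_{p,q}x}{x}\right)^r>2 \quad \text{for all } x\in\left(0,\tfrac{\pi_{r,q}}{2}\right).$$
   Context: For $0<q<\infty$ and $\frac{q}{q+1}<p<\infty$: let $F_{p,q}(y)=\int_0^y (1-t^q)^{-1/p}\,dt$ for $y\in[0,1)$ and $\pi_{p,q}=2\int_0^1(1-t^q)^{-1/p}\,dt\in(0,\infty]$ (it equals $\infty$ when $p\le 1$). The function $\sin_{p,q}:[0,\pi_{p,q}/2)\to[0,1)$ is the inverse of $F_{p,q}$, $\cos_{p,q}x=\frac{d}{dx}\sin_{p,q}x$, and $\operatorname{tam}_{p,q}x=\sin_{p,q}x/\cos_{p,q}^{p/q}x$. Let $G_{p,q}(y)=\int_0^y(1+t^q)^{-1/p}\,dt$ for $y\in[0,\infty)$; its range is $[0,\pi_{r,q}/2)$ with $r=\frac{pq}{pq+p-q}$ (which also satisfies $\frac{q}{q+1}<r<\infty$). The function $\sinh_{p,q}:[0,\pi_{r,q}/2)\to[0,\infty)$ is the inverse of $G_{p,q}$, $\cosh_{p,q}x=\frac{d}{dx}\sinh_{p,q}x$,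 and $\operatorname{tamh}_{p,q}x=\sinh_{p,q}x/\cosh_{p,q}^{p/q}x$. *)

From Stdlib Require Import Reals Lra ClassicalEpsilon.
From Coquelicot Require Import Coquelicot.
Open Scope R_scope.

(* real power x^a for x >= 0, with the convention 0^a = 0 (a > 0 in use) *)
Definition rpow (x a : R) : R := if Rlt_dec 0 x then Rpower x a else 0.

Definition F_pq (p q y : R) : R :=
  RInt (fun t => Rpower (1 - rpow t q) (- / p)) 0 y.

Definition G_pq (p q y : R) : R :=
  RInt (fun t => Rpower (1 + rpow t q) (- / p)) 0 y.

(* pi_{p,q} = 2 * int_0^1 (1-t^q)^(-1/p) dt in (0, +oo]; the improper integral
   of the positive integrand is the supremum of F_{p,q} over [0,1). *)
Definition pi_pq (p q : R) : Rbar :=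
  Rbar_mult 2 (Lub_Rbar (fun z => exists y, 0 <= y < 1 /\ z = F_pq p q y)).

Definition sin_pq (p q x : R) : R :=
  epsilon (inhabits 0) (fun y => 0 <= y < 1 /\ F_pq p q y = x).
Definition cos_pq (p q x : R) : R := Derive (sin_pq p q) x.
Definition tam_pq (p q x : R) : R := sin_pq p q x / Rpower (cos_pq p q x) (p / q).

Definition sinh_pq (p q x : R) : R :=
  epsilon (inhabits 0) (fun y => 0 <= y /\ G_pq p q y = x).
Definition cosh_pq (p q x : R) : R := Derive (sinh_pq p q) x.
Definition tamh_pq (p q x : R) : R := sinh_pq p q x / Rpower (cosh_pq p q x) (p / q).

(* Put y = sin_{p,q} x and w = 1 - y^q, so that x = F_{p,q}(y), cos_{p,q} x = w^(1/p)
   and tam_{p,q} x = y w^(-1/q).  The product of the two summands is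
   (y/x)^(p+r) w^(-r/q); as (p + r) / (p (q + 1)) = r / q it exceeds 1 as soon as
   F_{p,q}(y) < y w^(-1/(p(q+1))), and then AM-GM gives a sum larger than 2.  This
   estimate follows from Bernoulli's inequality by differentiating.  The hyperbolic
   case is identical with w = 1 + y^q, the kernels (1 - t^q)^(-1/p) and (1 + t^q)^(-1/p)
   being treated together as (1 + s t^q)^(-1/p), s = -1 or 1; its domain is
   controlled by the substitution t |-> t (1 - t^q)^(-1/q), which carries F_{r,q}
   onto G_{p,q}. *)

From Stdlib Require Import Reals Lra Ranalysis5 ClassicalEpsilon.
From Coquelicot Require Import Coquelicot.
Open Scope R_scope.

Lemma Rpower_gt0 x e : 0 < Rpower x e.
Proof. apply exp_pos. Qed.

Lemma Rpower_Rinv_l x e : 0 < x -> Rpower (/ x) e = Rpower x (- e).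
Proof. intros Hx; unfold Rpower; rewrite ln_Rinv by exact Hx; f_equal; ring. Qed.

Lemma rpow_Rpower t q : 0 < t -> rpow t q = Rpower t q.
Proof. intros Ht; unfold rpow; destruct (Rlt_dec 0 t); lra. Qed.

Lemma rpow_le0 t q : t <= 0 -> rpow t q = 0.
Proof. intros Ht; unfold rpow; destruct (Rlt_dec 0 t); lra. Qed.

Lemma rpow_ge0 t q : 0 <= rpow t q.
Proof. unfold rpow; destruct (Rlt_dec 0 t); [left; apply Rpower_gt0 | lra]. Qed.

Lemma continuity_pt_Rpower_l x e : 0 < x -> continuity_pt (fun x => Rpower x e) x.
Proof.
  intros Hx; apply derivable_continuous_pt.
  exists (e * Rpower x (e - 1)); now apply derivable_pt_lim_power.
Qed.

Lemma continuity_pt_rpow q t : 0 < q -> continuity_pt (fun t => rpow t q) t.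
Proof.
  intros Hq; destruct (Rtotal_order t 0) as [Ht | [-> | Ht]].
  - apply (continuity_pt_ext_loc (fun _ => 0)).
    + apply (filter_imp (fun u => u < 0)); [intros u Hu; rewrite rpow_le0; lra |].
      now apply open_lt.
    + apply continuity_pt_const; now intros ? ?.
  - intros eps Heps; exists (Rpower eps (/ q)); split; [apply Rpower_gt0 |].
    intros x [_ Hx]; simpl in *; unfold R_dist in *.
    rewrite (rpow_le0 0), Rminus_0_r in * by lra.
    destruct (Rle_dec x 0) as [Hx0 | Hx0].
    + now rewrite rpow_le0, Rabs_R0.
    + rewrite rpow_Rpower, Rabs_pos_eq by (lra || left; apply Rpower_gt0).
      rewrite Rabs_pos_eq in Hx by lra.
      replace eps with (Rpower (Rpower eps (/ q)) q)
        by (rewrite Rpower_mult, Rinv_l by lra; now apply Rpower_1).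
      apply Rlt_Rpower_l; lra.
  - apply (continuity_pt_ext_loc (fun t => Rpower t q)).
    + apply (filter_imp (fun u => 0 < u)); [intros u Hu; now rewrite rpow_Rpower |].
      now apply open_gt.
    + now apply continuity_pt_Rpower_l.
Qed.

Lemma is_derive_inverse (F dF g : R -> R) lb ub y :
  lb < y < ub ->
  (forall u v, lb <= u -> u < v -> v <= ub -> F u < F v) ->
  (forall t, lb <= t <= ub -> is_derive F t (dF t)) ->
  (forall x, F lb <= x <= F ub -> lb <= g x <= ub /\ F (g x) = x) ->
  dF y <> 0 ->
  is_derive g (F y) (/ dF y).
Proof.
  intros Hy Hincr HdF Hg HdF0.
  assert (HFg : forall x, F lb <= x -> x <= F ub -> comp F g x = id x)
    by (intros x H1 H2; unfold comp, id; apply Hg; lra).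
  assert (Hgb : forall x, F lb <= x -> x <= F ub -> lb <= g x <= ub)
    by (intros x H1 H2; apply Hg; lra).
  assert (HgF : forall t, lb <= t <= ub -> g (F t) = t)
    by exact (leftinv_is_rightinv_interv F g lb ub Hincr HFg Hgb).
  assert (HFy : F lb < F y < F ub) by (split; apply Hincr; lra).
  assert (Hcont : continuity_pt g (F y)).
  { apply (continuity_pt_recip_interv F g lb ub); auto; try lra.
    intros t Ht; apply continuity_pt_filterlim.
    apply (ex_derive_continuous F); eexists; now apply HdF. }
  assert (Prf : forall a, g (F lb) <= a <= g (F ub) -> derivable_pt F a).
  { intros a Ha; rewrite !HgF in Ha by lra.
    apply ex_derive_Reals_0; eexists; now apply HdF. }
  assert (Hgy : g (F lb) <= g (F y) <= g (F ub)) by (rewrite !HgF; lra).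
  assert (HdFy : derive_pt F (g (F y)) (Prf _ Hgy) = dF y).
  { apply derive_pt_eq_0; rewrite HgF by lra; apply is_derive_Reals, HdF; lra. }
  apply is_derive_Reals; rewrite <- Rdiv_1_l, <- HdFy.
  apply (derivable_pt_lim_recip_interv F g (F lb) (F ub) (F y) Prf Hcont); try lra.
  intros x Hx; apply HFg; lra.
Qed.

Lemma ln_lt_sub_1 z : 0 < z -> z <> 1 -> ln z < z - 1.
Proof.
  intros Hz Hz1; generalize (exp_ineq1 (ln z) (ln_neq_0 z Hz1 Hz)).
  rewrite exp_ln by exact Hz; lra.
Qed.

Lemma ln_le_sub_1 z : 0 < z -> ln z <= z - 1.
Proof. intros Hz; generalize (exp_ineq1_le (ln z)); rewrite exp_ln by exact Hz; lra. Qed.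

(* Add [ln z <= z - 1] at [z = w / m] and [z = 1 / m] with weights [b] and [1 - b]. *)
Lemma Rpower_lt_bernoulli w b : 0 < w -> w <> 1 -> 0 < b < 1 ->
  Rpower w b < 1 + b * (w - 1).
Proof.
  intros Hw Hw1 Hb; set (m := 1 + b * (w - 1)).
  assert (Hm : 0 < m) by (unfold m; generalize (Rmult_lt_0_compat b w (proj1 Hb) Hw); lra).
  assert (Hwm : w / m <> 1).
  { intros E; apply Hw1.
    assert (Ew : w = m) by (rewrite <- (Rmult_1_l m), <- E; field; lra).
    assert (H0 : (1 - b) * (w - 1) = 0) by (unfold m in Ew; lra).
    apply Rmult_integral in H0; lra. }
  assert (Hlt := ln_lt_sub_1 (w / m) ltac:(apply Rdiv_lt_0_compat; lra) Hwm).
  assert (Hle := ln_le_sub_1 (/ m) ltac:(now apply Rinv_0_lt_compat)).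
  unfold Rdiv in Hlt; rewrite ln_mult, ln_Rinv in Hlt by (auto; now apply Rinv_0_lt_compat).
  rewrite ln_Rinv in Hle by exact Hm.
  assert (Hsum : b * (w * / m - 1) + (1 - b) * (/ m - 1) = 0) by (unfold m in *; field; lra).
  unfold Rpower; rewrite <- (exp_ln m) by exact Hm; apply exp_increasing; nra.
Qed.

Lemma Rlt_of_derive_pos (f df : R -> R) u v : u < v ->
  (forall c, u <= c <= v -> continuity_pt f c) ->
  (forall c, u < c < v -> is_derive f c (df c)) ->
  (forall c, u < c < v -> 0 < df c) -> f u < f v.
Proof.
  intros Huv Hcont Hder Hpos.
  assert (Hf : forall c, u < c < v -> derivable_pt f c)
    by (intros c Hc; apply ex_derive_Reals_0; eexists; now apply Hder).
  assert (Hid : forall c, u < c < v -> derivable_pt id c) by (intros; apply derivable_pt_id).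
  destruct (MVT f id u v Hf Hid Huv Hcont) as [c [Hc E]].
  { intros; apply derivable_continuous_pt, derivable_pt_id. }
  rewrite (derive_pt_eq_0 f c (df c) (Hf c Hc)) in E by (apply is_derive_Reals, Hder, Hc).
  rewrite (derive_pt_eq_0 id c 1 (Hid c Hc)) in E by apply derivable_pt_lim_id.
  unfold id in E; specialize (Hpos c Hc); nra.
Qed.

Lemma q_lt_p_mul_q_add_1 p q : 0 < q -> q / (q + 1) < p -> q < p * (q + 1).
Proof.
  intros Hq Hp; apply (Rmult_lt_compat_r (q + 1)) in Hp; [| lra].
  unfold Rdiv in Hp; rewrite Rmult_assoc, Rinv_l, Rmult_1_r in Hp by lra; exact Hp.
Qed.

Lemma add_gt_2_of_mul_gt_1 A B : 0 < A -> 0 < B -> 1 < A * B -> A + B > 2.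
Proof.
  intros HA HB HAB; assert (0 <= (A - B) * (A - B)) by apply Rle_0_sqr; nra.
Qed.

Lemma sum_Rpower_gt_2 p q r x y w : 0 < q -> q / (q + 1) < p ->
  r = p * q / (p * q + p - q) -> 0 < x -> 0 < y -> 0 < w ->
  x < y * Rpower w (- / (p * (q + 1))) ->
  Rpower (y / x) p + Rpower (y / Rpower w (/ q) / x) r > 2.
Proof.
  intros Hq Hp Hr Hx Hy Hw Hxy.
  assert (Hpq := q_lt_p_mul_q_add_1 p q Hq Hp).
  assert (Hp0 : 0 < p) by nra.
  assert (Hr0 : 0 < r) by (rewrite Hr; apply Rdiv_lt_0_compat; nra).
  set (a := / (p * (q + 1))) in *.
  assert (Hlog : a * ln w < ln y - ln x).
  { apply ln_increasing in Hxy; [| exact Hx].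
    rewrite ln_mult, ln_Rpower in Hxy by (auto; apply Rpower_gt0); lra. }
  apply add_gt_2_of_mul_gt_1; try apply Rpower_gt0.
  apply ln_lt_inv; [lra | apply Rmult_lt_0_compat; apply Rpower_gt0 |].
  assert (Hwq : 0 < Rpower w (/ q)) by apply Rpower_gt0.
  rewrite ln_1, ln_mult, !ln_Rpower, !ln_div, ln_Rpower
    by (auto; try apply Rpower_gt0; apply Rdiv_lt_0_compat; auto).
  replace (p * (ln y - ln x) + r * (ln y - / q * ln w - ln x))
    with ((p + r) * (ln y - ln x - a * ln w))
    by (rewrite Hr; unfold a; field; repeat split; nra).
  apply Rmult_lt_0_compat; lra.
Qed.

Lemma exists_gt_of_double_lt_Lub_Rbar (E : R -> Prop) x :
  Rbar_lt (2 * x) (Rbar_mult 2 (Lub_Rbar E)) -> exists z, E z /\ x < z.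
Proof.
  intros Hlt; apply NNPP; intros Hno.
  destruct (Lub_Rbar_correct E) as [_ Hleast].
  assert (Hx : Rbar_le (Lub_Rbar E) x).
  { apply Hleast; intros z Hz; apply Rnot_lt_le; intros Hzx; apply Hno; now exists z. }
  destruct (Lub_Rbar E) as [l | |]; simpl in *; try tauto.
  - lra.
  - destruct (Rle_dec 0 2) as [H2 | H2]; [destruct (Rle_lt_or_eq_dec 0 2 H2) |];
      simpl in Hlt; lra.
Qed.

Definition kernel (s e q t : R) : R := Rpower (1 + s * rpow t q) e.
Definition kernel_int (s e q y : R) : R := RInt (kernel s e q) 0 y.

Lemma kernel_gt0 s e q t : 0 < kernel s e q t.
Proof. apply Rpower_gt0. Qed.

Lemma kernel_int_0 s e q : kernel_int s e q 0 = 0.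
Proof. unfold kernel_int; now rewrite RInt_point. Qed.

Lemma F_pq_kernel_int p q y : F_pq p q y = kernel_int (-1) (- / p) q y.
Proof.
  apply (RInt_ext (V := R_CompleteNormedModule)); intros t _.
  unfold kernel; f_equal; ring.
Qed.

Lemma G_pq_kernel_int p q y : G_pq p q y = kernel_int 1 (- / p) q y.
Proof.
  apply (RInt_ext (V := R_CompleteNormedModule)); intros t _.
  unfold kernel; f_equal; ring.
Qed.

Lemma one_sub_rpow_gt0 q t : 0 < q -> t < 1 -> 0 < 1 + -1 * rpow t q.
Proof.
  intros Hq Ht; destruct (Rle_lt_dec t 0) as [Ht0 | Ht0].
  - rewrite rpow_le0; lra.
  - rewrite rpow_Rpower by lra.
    assert (Rpower t q < Rpower 1 q) by (apply Rlt_Rpower_l; lra).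
    unfold Rpower at 2 in H; rewrite ln_1, Rmult_0_r, exp_0 in H; lra.
Qed.

Lemma one_add_rpow_gt0 q t : 0 < 1 + 1 * rpow t q.
Proof. generalize (rpow_ge0 t q); lra. Qed.

Section Kernel.

Variables (s e q M : R).
Hypotheses (Hq : 0 < q) (HM : 0 < M)
  (Hdom : forall t, t < M -> 0 < 1 + s * rpow t q).

Lemma continuity_pt_kernel t : t < M -> continuity_pt (kernel s e q) t.
Proof.
  intros Ht.
  change (continuity_pt (comp (fun x => Rpower x e)
    (plus_fct (fct_cte 1) (mult_fct (fct_cte s) (fun t => rpow t q)))) t).
  apply continuity_pt_comp; [| now apply continuity_pt_Rpower_l, Hdom].
  apply continuity_pt_plus; [apply continuity_pt_const; now intros ? ? |].
  apply continuity_pt_mult; [apply continuity_pt_const; now intros ? ? |].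
  now apply continuity_pt_rpow.
Qed.

Lemma ex_RInt_kernel y : y < M -> ex_RInt (kernel s e q) 0 y.
Proof.
  intros Hy; apply (ex_RInt_continuous (V := R_CompleteNormedModule)).
  intros t Ht; apply continuity_pt_filterlim, continuity_pt_kernel.
  assert (Rmax 0 y < M) by (apply Rmax_lub_lt; lra); lra.
Qed.

Lemma is_derive_kernel_int y : y < M -> is_derive (kernel_int s e q) y (kernel s e q y).
Proof.
  intros Hy; apply (is_derive_RInt (V := R_CompleteNormedModule) _ _ 0).
  - apply (filter_imp (fun u => u < M)); [| now apply open_lt].
    intros u Hu; now apply RInt_correct, ex_RInt_kernel.
  - now apply continuity_pt_filterlim, continuity_pt_kernel.
Qed.

Lemma continuity_pt_kernel_int y : y < M -> continuity_pt (kernel_int s e q) y.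
Proof.
  intros Hy; apply continuity_pt_filterlim.
  apply (ex_derive_continuous (kernel_int s e q)).
  eexists; now apply is_derive_kernel_int.
Qed.

Lemma kernel_int_increasing u v : u < v -> v < M -> kernel_int s e q u < kernel_int s e q v.
Proof.
  intros Huv Hv; apply (incr_function _ m_infty M (kernel s e q)); simpl; auto; try lra.
  - intros t _ Ht; now apply is_derive_kernel_int.
  - intros t _ _; apply kernel_gt0.
Qed.

Lemma kernel_int_root x Y : 0 <= Y < M -> 0 < x < kernel_int s e q Y ->
  exists y, 0 < y < Y /\ kernel_int s e q y = x.
Proof.
  intros HY Hx; rewrite <- (kernel_int_0 s e q) in Hx.
  assert (HY0 : 0 < Y) by (destruct (Req_dec Y 0) as [-> | ]; lra).
  destruct (IVT_interv (fun t => kernel_int s e q t - x) 0 Y) as [y [Hy Ey]];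
    [| exact HY0 | lra | lra |].
  - intros t Ht; apply continuity_pt_minus; [apply continuity_pt_kernel_int; lra |].
    apply continuity_pt_const; now intros ? ?.
  - exists y; split; [split | lra].
    + destruct (Req_dec y 0) as [-> | ]; lra.
    + destruct (Req_dec y Y) as [-> | ]; lra.
Qed.

Lemma kernel_int_solution_bounds x y Y : 0 <= y < M -> Y < M ->
  kernel_int s e q y = x -> 0 < x < kernel_int s e q Y -> 0 < y < Y.
Proof.
  intros Hy HY Ey Hx; split.
  - destruct (Req_dec y 0) as [-> | ]; [rewrite kernel_int_0 in Ey |]; lra.
  - destruct (Rlt_le_dec y Y) as [| HYy]; auto.
    destruct HYy as [HYy | ->]; [| lra].
    generalize (kernel_int_increasing Y y HYy (proj2 Hy)); lra.
Qed.

Lemma Derive_kernel_int_inverse (g : R -> R) x Y : Y < M ->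
  0 < x < kernel_int s e q Y ->
  (forall x', 0 < x' < kernel_int s e q Y ->
     0 < g x' < Y /\ kernel_int s e q (g x') = x') ->
  Derive g x = / kernel s e q (g x).
Proof.
  intros HY Hx Hg; destruct (Hg x Hx) as [Hy Ey].
  set (y := g x) in *.
  assert (Hincr : forall u v, u < v -> v < M -> kernel_int s e q u < kernel_int s e q v)
    by exact kernel_int_increasing.
  assert (Hle : forall u v, u < M -> kernel_int s e q u <= kernel_int s e q v -> u <= v).
  { intros u v Hu Huv; apply Rnot_lt_le; intros Hvu; specialize (Hincr v u Hvu Hu); lra. }
  apply is_derive_unique; rewrite <- Ey.
  apply (is_derive_inverse (kernel_int s e q) (kernel s e q) g (y / 2) ((y + Y) / 2)); try lra.
  - intros u v _ Huv Hv; apply Hincr; lra.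
  - intros t Ht; apply is_derive_kernel_int; lra.
  - intros x' Hx'.
    assert (kernel_int s e q 0 < kernel_int s e q (y / 2)) by (apply Hincr; lra).
    assert (kernel_int s e q ((y + Y) / 2) < kernel_int s e q Y) by (apply Hincr; lra).
    rewrite kernel_int_0 in *.
    destruct (Hg x') as [Hgx' Egx']; [lra |].
    split; [split | exact Egx']; apply Hle; lra.
  - apply Rgt_not_eq, kernel_gt0.
Qed.

End Kernel.

Section KeyEstimate.

Variables (s p q M : R).
Hypotheses (Hq : 0 < q) (Hp : q / (q + 1) < p) (HM : 0 < M)
  (Hdom : forall t, t < M -> 0 < 1 + s * rpow t q) (Hs : s <> 0).

(* The difference of the two sides vanishes at 0, and its derivative at t is a positive
   multiple of the Bernoulli gap [1 + b (w - 1) - w^b], where [w = 1 + s t^q] and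
   [b = 1 - q / (p (q + 1))] lies in (0, 1). *)
Lemma kernel_int_lt_mul_kernel y : 0 < y < M ->
  kernel_int s (- / p) q y < y * kernel s (- / (p * (q + 1))) q y.
Proof.
  intros Hy.
  assert (Hpq := q_lt_p_mul_q_add_1 p q Hq Hp).
  assert (Hp0 : 0 < p) by nra.
  set (a := / (p * (q + 1))).
  assert (Ha : 0 < a) by (apply Rinv_0_lt_compat; lra).
  assert (Hb : 0 < 1 - a * q < 1).
  { split; [| nra].
    enough (a * q < a * (p * (q + 1))) by (unfold a in *; rewrite Rinv_l in * by lra; lra).
    now apply Rmult_lt_compat_l. }
  set (phi := fun t => t * kernel s (- a) q t - kernel_int s (- / p) q t).
  set (dphi := fun c => kernel s (- a) q c * (1 - a * q * s * rpow c q / (1 + s * rpow c q))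
                        - kernel s (- / p) q c).
  enough (phi 0 < phi y) by (unfold phi in *; rewrite kernel_int_0 in *; lra).
  apply (Rlt_of_derive_pos phi dphi); [lra | | |].
  - intros c Hc; apply continuity_pt_minus.
    + apply continuity_pt_mult; [apply derivable_continuous_pt, derivable_pt_id |].
      apply (continuity_pt_kernel s (- a) q M); auto; lra.
    + apply (continuity_pt_kernel_int s (- / p) q M); auto; lra.
  - intros c Hc; unfold phi, dphi.
    apply (is_derive_minus (fun t => t * kernel s (- a) q t) (kernel_int s (- / p) q)).
    2: apply (is_derive_kernel_int s (- / p) q M); auto; lra.
    assert (Hw : 0 < 1 + s * exp (q * ln c))
      by (generalize (Hdom c ltac:(lra)); now rewrite rpow_Rpower by lra).
    apply (is_derive_ext_loc (fun t => t * exp (- a * ln (1 + s * exp (q * ln t))))).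
    { apply (filter_imp (fun u => 0 < u)); [| now apply open_gt; lra].
      intros u Hu; unfold kernel; now rewrite rpow_Rpower. }
    auto_derive; [repeat split; lra |].
    unfold kernel; rewrite rpow_Rpower by lra; unfold Rpower; field; lra.
  - intros c Hc; unfold dphi, kernel; rewrite rpow_Rpower by lra.
    assert (HS : 0 < Rpower c q) by apply Rpower_gt0.
    assert (Hw : 0 < 1 + s * Rpower c q)
      by (generalize (Hdom c ltac:(lra)); now rewrite rpow_Rpower by lra).
    set (w := 1 + s * Rpower c q) in *.
    assert (Hw1 : w <> 1).
    { unfold w; intros E; apply Hs; apply (Rmult_eq_reg_r (Rpower c q)); lra. }
    assert (Hbern := Rpower_lt_bernoulli w (1 - a * q) Hw Hw1 Hb).
    replace (- / p) with (- a + (1 - a * q) + - (1))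
      by (unfold a; field; split; lra).
    rewrite !Rpower_plus, (Rpower_Ropp w 1), (Rpower_1 w) by exact Hw.
    replace (Rpower w (- a) * (1 - a * q * s * Rpower c q / w)
             - Rpower w (- a) * Rpower w (1 - a * q) * / w)
      with (Rpower w (- a) / w * (1 + (1 - a * q) * (w - 1) - Rpower w (1 - a * q)))
      by (unfold w in *; field; lra).
    apply Rmult_lt_0_compat; [apply Rdiv_lt_0_compat; [apply Rpower_gt0 | lra] | lra].
Qed.

Lemma sum_Rpower_inverse_gt_2 (g : R -> R) x Y : Y < M ->
  0 < x < kernel_int s (- / p) q Y ->
  (forall x', 0 < x' < kernel_int s (- / p) q Y ->
     0 < g x' < Y /\ kernel_int s (- / p) q (g x') = x') ->
  Rpower (g x / x) p + Rpower (g x / Rpower (Derive g x) (p / q) / x)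
    (p * q / (p * q + p - q)) > 2.
Proof.
  intros HY Hx Hg; destruct (Hg x Hx) as [Hy Ey].
  assert (Hp0 : 0 < p) by (generalize (q_lt_p_mul_q_add_1 p q Hq Hp); nra).
  rewrite (Derive_kernel_int_inverse s (- / p) q M Hq HM Hdom g x Y) by assumption.
  assert (Hest := kernel_int_lt_mul_kernel (g x) ltac:(lra)).
  rewrite Ey in Hest; unfold kernel in *; rewrite rpow_Rpower in * by lra.
  assert (Hw : 0 < 1 + s * Rpower (g x) q)
    by (rewrite <- rpow_Rpower by lra; apply Hdom; lra).
  rewrite Rpower_Rinv_l, Rpower_mult by apply Rpower_gt0.
  replace (- / p * - (p / q)) with (/ q) by (field; lra).
  apply sum_Rpower_gt_2; auto; lra.
Qed.

End KeyEstimate.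

(* [u = t (1 - t^q)^(-1/q)], so that [1 + u^q = 1 / (1 - t^q)]. *)
Definition subst_map (q t : R) : R := t * kernel (-1) (- / q) q t.

Lemma subst_map_ge0 q t : 0 <= t -> 0 <= subst_map q t.
Proof. intros Ht; apply Rmult_le_pos; [exact Ht | left; apply kernel_gt0]. Qed.

Lemma kernel_subst_map p q t : 0 < q -> 0 < t < 1 ->
  kernel 1 (- / p) q (subst_map q t) = Rpower (1 - Rpower t q) (/ p).
Proof.
  intros Hq Ht.
  assert (Hw : 0 < 1 + -1 * rpow t q) by (apply one_sub_rpow_gt0; lra).
  assert (Hphi : 0 < subst_map q t) by (apply Rmult_lt_0_compat; [lra | apply kernel_gt0]).
  unfold kernel at 1; rewrite rpow_Rpower by exact Hphi.
  unfold subst_map, kernel; rewrite rpow_Rpower in * by lra.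
  rewrite <- Rpower_mult_distr, Rpower_mult by (lra || apply Rpower_gt0).
  replace (- / q * q) with (- (1)) by (field; lra).
  rewrite (Rpower_Ropp _ 1), Rpower_1 by exact Hw.
  replace (1 + 1 * (Rpower t q * / (1 + -1 * Rpower t q))) with (/ (1 - Rpower t q))
    by (field; lra).
  rewrite Rpower_Rinv_l by lra; f_equal; ring.
Qed.

Lemma is_derive_subst_map q t : 0 < q -> 0 < t < 1 ->
  is_derive (subst_map q) t (Rpower (1 - Rpower t q) (- / q - 1)).
Proof.
  intros Hq Ht.
  assert (Hw : 0 < 1 + -1 * exp (q * ln t))
    by (generalize (one_sub_rpow_gt0 q t Hq (proj2 Ht)); now rewrite rpow_Rpower by lra).
  apply (is_derive_ext_loc (fun u => u * exp (- / q * ln (1 + -1 * exp (q * ln u))))).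
  { apply (filter_imp (fun u => 0 < u)); [| now apply open_gt; lra].
    intros u Hu; unfold subst_map, kernel; now rewrite rpow_Rpower. }
  auto_derive; [repeat split; lra |].
  replace (- / q - 1) with (- / q + - (1)) by ring.
  rewrite Rpower_plus, (Rpower_Ropp _ 1), Rpower_1 by (unfold Rpower; lra).
  unfold Rpower; replace (1 + -1 * exp (q * ln t)) with (1 - exp (q * ln t)) in * by ring.
  field; split; lra.
Qed.

Lemma kernel_int_subst_map p q r t : 0 < q -> 0 < p -> / r = 1 + / q - / p -> 0 <= t < 1 ->
  kernel_int 1 (- / p) q (subst_map q t) = kernel_int (-1) (- / r) q t.
Proof.
  intros Hq Hp Hr Ht.
  set (K := fun u => kernel_int 1 (- / p) q (subst_map q u) - kernel_int (-1) (- / r) q u).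
  enough (K t = K 0)
    by (unfold K, subst_map in *; rewrite Rmult_0_l, !kernel_int_0 in *; lra).
  destruct (Req_dec t 0) as [-> | Ht0]; [reflexivity |].
  destruct (MVT_gen K 0 t (fun _ => 0)) as [c [_ Hc]]; [| | lra];
    rewrite Rmin_left, Rmax_right by lra; intros u Hu.
  - assert (Hsub := is_derive_subst_map q u Hq ltac:(lra)).
    assert (H1 := is_derive_comp _ _ u _ _
      (is_derive_kernel_int 1 (- / p) q (subst_map q u + 1) Hq
         ltac:(generalize (subst_map_ge0 q u ltac:(lra)); lra)
         (fun t _ => one_add_rpow_gt0 q t) (subst_map q u) ltac:(lra)) Hsub).
    assert (H2 := is_derive_kernel_int (-1) (- / r) q 1 Hq Rlt_0_1
      (fun t => one_sub_rpow_gt0 q t Hq) u ltac:(lra)).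
    assert (HK := is_derive_minus _ _ u _ _ H1 H2).
    rewrite kernel_subst_map in HK by lra.
    unfold kernel in HK; rewrite rpow_Rpower in HK by lra.
    match type of HK with is_derive _ _ ?l => replace 0 with l; [exact HK |] end.
    unfold minus, plus, opp, scal; simpl; unfold mult; simpl.
    rewrite <- Rpower_plus, Hr.
    replace (- / q - 1 + / p) with (- (1 + / q - / p)) by ring.
    replace (1 + -1 * Rpower u q) with (1 - Rpower u q) by ring; ring.
  - change (continuity_pt (minus_fct (comp (kernel_int 1 (- / p) q) (subst_map q))
                                       (kernel_int (-1) (- / r) q)) u).
    apply continuity_pt_minus.
    + apply continuity_pt_comp.
      * change (continuity_pt (mult_fct id (kernel (-1) (- / q) q)) u).
        apply continuity_pt_mult; [apply derivable_continuous_pt, derivable_pt_id |].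
        apply (continuity_pt_kernel (-1) (- / q) q 1); auto; try lra.
        intros; now apply one_sub_rpow_gt0.
      * apply (continuity_pt_kernel_int 1 (- / p) q (subst_map q u + 1)); auto;
          [generalize (subst_map_ge0 q u ltac:(lra)); lra | | lra].
        intros; apply one_add_rpow_gt0.
    + apply (continuity_pt_kernel_int (-1) (- / r) q 1); auto; try lra.
      intros; now apply one_sub_rpow_gt0.
Qed.

Lemma sin_pq_spec p q x Y : 0 < q -> 0 <= Y < 1 -> 0 < x < F_pq p q Y ->
  0 < sin_pq p q x < Y /\ kernel_int (-1) (- / p) q (sin_pq p q x) = x.
Proof.
  intros Hq HY Hx; rewrite F_pq_kernel_int in Hx.
  assert (Hdom : forall t, t < 1 -> 0 < 1 + -1 * rpow t q)
    by (intros; now apply one_sub_rpow_gt0).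
  destruct (kernel_int_root (-1) (- / p) q 1 Hq Rlt_0_1 Hdom x Y HY Hx) as [y [Hy Ey]].
  destruct (epsilon_spec (inhabits 0) (fun y => 0 <= y < 1 /\ F_pq p q y = x))
    as [Hs Es]; [exists y; rewrite F_pq_kernel_int; split; [lra | exact Ey] |].
  fold (sin_pq p q x) in Hs, Es; rewrite F_pq_kernel_int in Es.
  split; [| exact Es].
  apply (kernel_int_solution_bounds (-1) (- / p) q 1 Hq Rlt_0_1 Hdom x); auto; lra.
Qed.

Lemma sinh_pq_spec p q x Y : 0 < q -> 0 <= Y -> 0 < x < G_pq p q Y ->
  0 < sinh_pq p q x < Y /\ kernel_int 1 (- / p) q (sinh_pq p q x) = x.
Proof.
  intros Hq HY Hx; rewrite G_pq_kernel_int in Hx.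
  assert (Hdom : forall M t, t < M -> 0 < 1 + 1 * rpow t q)
    by (intros; apply one_add_rpow_gt0).
  destruct (kernel_int_root 1 (- / p) q (Y + 1) Hq ltac:(lra) (Hdom _) x Y
              ltac:(lra) Hx) as [y [Hy Ey]].
  destruct (epsilon_spec (inhabits 0) (fun y => 0 <= y /\ G_pq p q y = x))
    as [Hs Es]; [exists y; rewrite G_pq_kernel_int; split; [lra | exact Ey] |].
  fold (sinh_pq p q x) in Hs, Es; rewrite G_pq_kernel_int in Es.
  split; [| exact Es].
  set (M := sinh_pq p q x + Y + 1).
  apply (kernel_int_solution_bounds 1 (- / p) q M Hq ltac:(unfold M; lra) (Hdom M) x);
    unfold M; auto; lra.
Qed.

Theorem theorem3p1 (p q : R) (hq : 0 < q) (hp : q / (q + 1) < p) :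
  let r := p * q / (p * q + p - q) in
  (forall x : R, 0 < x -> Rbar_lt (Finite (2 * x)) (pi_pq p q) ->
     Rpower (sin_pq p q x / x) p + Rpower (tam_pq p q x / x) r > 2) /\
  (forall x : R, 0 < x -> Rbar_lt (Finite (2 * x)) (pi_pq r q) ->
     Rpower (sinh_pq p q x / x) p + Rpower (tamh_pq p q x / x) r > 2).
Proof.
  intros r.
  assert (Hpq := q_lt_p_mul_q_add_1 p q hq hp).
  assert (Hp0 : 0 < p) by nra.
  split; intros x Hx Hlt.
  - destruct (exists_gt_of_double_lt_Lub_Rbar _ x Hlt) as [z [[Y [HY ->]] HxY]].
    apply (sum_Rpower_inverse_gt_2 (-1) p q 1 hq hp Rlt_0_1
             (fun t => one_sub_rpow_gt0 q t hq) ltac:(lra) (sin_pq p q) x Y); [lra | |].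
    + now rewrite <- F_pq_kernel_int.
    + intros x' Hx'; rewrite <- F_pq_kernel_int in Hx'; now apply sin_pq_spec.
  - destruct (exists_gt_of_double_lt_Lub_Rbar _ x Hlt) as [z [[Y' [HY' ->]] HxY']].
    assert (Hr : / r = 1 + / q - / p) by (unfold r; field; repeat split; nra).
    set (Y := subst_map q Y').
    assert (HY : 0 <= Y) by (apply subst_map_ge0; lra).
    assert (HGY : G_pq p q Y = F_pq r q Y').
    { unfold Y; rewrite G_pq_kernel_int, F_pq_kernel_int.
      now apply kernel_int_subst_map. }
    apply (sum_Rpower_inverse_gt_2 1 p q (Y + 1) hq hp ltac:(lra)
             (fun t _ => one_add_rpow_gt0 q t) ltac:(lra) (sinh_pq p q) x Y); [lra | |].
    + rewrite <- G_pq_kernel_int; lra.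
    + intros x' Hx'; rewrite <- G_pq_kernel_int in Hx'; now apply sinh_pq_spec.
Qed.
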